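(* Let $c\in\mathbb{R}$, $\beta\geq0$, $q\in(0,1)$, and let $J:\mathbb{Z}\to\mathbb{R}$ satisfy $$\sum_{i=-\infty}^0 \left(1+q^{2(i-c)}\frac{e^{\beta J(i-1)}}{e^{\beta |J(i)|}+q^2 e^{\beta |J(i-2)|}}\right)^{-1} + \sum_{i=1}^\infty \left(1+q^{-2(i-c)}\frac{e^{\beta J(i-1)}}{e^{\beta |J(i)|}+q^{-2} e^{\beta |J(i-2)|}}\right)^{-1}<\infty.$$ Then for every $n\in\mathbb{Z}$, $$\mu_{J}^c(\{N=n\}) = q^{-2nc + n(n+1)}\,\mu_{J}^c\Big(\mathbb{1}_{\{N=0\}}e^{-\beta H^{(n)}_{J}}\Big),\qquad\text{where } H_{J}^{(n)}(\sigma) = \sum_{i\in\mathbb Z} \big(J(i+n) - J(i)\big)\mathbb{1}_{\{\sigma_{i}\neq \sigma_{i+1}\}}.$$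
   Context: Spin configurations are $\sigma\in\{-1,+1\}^{\mathbb{Z}}$. Let $\mathcal{B}$ be the set of configurations for which there exist $a,b\in\mathbb{Z}$ with $\sigma_{a-i}=-1$ and $\sigma_{b+i}=+1$ for all $i\in\mathbb{N}$. The Hamiltonian is $H_J(\sigma)=\sum_{i\in\mathbb{Z}}J(i)\mathbb{1}_{\{\sigma_i\neq\sigma_{i+1}\}}$ and $f_c(\sigma)=2\sum_{i=1}^\infty(i-c)\mathbb{1}_{\{\sigma_i=-1\}}-2\sum_{i=-\infty}^0(i-c)\mathbb{1}_{\{\sigma_i=1\}}$. The probability measure $\mu^c_J$ is given by $\mu^c_J(\sigma)=e^{-\beta H_J(\sigma)}q^{f_c(\sigma)}/Z^J_{\beta,q,c}$ with $Z^J_{\beta,q,c}=\sum_\sigma e^{-\beta H_J(\sigma)}q^{f_c(\sigma)}$; under the displayed summability condition it is concentrated on $\mathcal{B}$. For $\sigma\in\mathcal{B}$ let $N_+(\sigma)=\#\{i\leq 0:\sigma_i=+1\}$, $N_-(\sigma)=\#\{i\geq1:\sigma_i=-1\}$ (both finite), and $N(\sigma)=N_-(\sigma)-N_+(\sigma)$. For a function $F$, $\mu^c_J(F)$ denotes the expectation of $F$ under $\mu^c_J$. *)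

From mathcomp Require Import all_boot all_order all_algebra.
From mathcomp Require Import all_classical all_reals all_analysis.
Set Implicit Arguments. Unset Strict Implicit. Unset Printing Implicit Defensive.
Import Order.TTheory GRing.Theory Num.Theory.
Local Open Scope classical_set_scope.
Local Open Scope ring_scope.

(* Spin configurations sigma in {-1,+1}^Z, encoded as int -> bool with
   true <-> +1 and false <-> -1. *)
Definition config := int -> bool.

Definition inB (s : config) : Prop :=
  exists a b : int, forall i : nat, s (a - i%:Z) = false /\ s (b + i%:Z) = true.

Definition walls (s : config) : set int := [set i | s i != s (i + 1)].

Section Model.
Variable R : realType.

Definition HJ (J : int -> R) (s : config) : R := \sum_(i \in walls s) J i.

Definition HJn (n : int) (J : int -> R) (s : config) : R :=
  \sum_(i \in walls s) (J (i + n) - J i).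

Definition fc (c : R) (s : config) : R :=
  2 * (\sum_(i \in [set i : int | 1 <= i /\ s i = false]) (i%:~R - c))
  - 2 * (\sum_(i \in [set i : int | i <= 0 /\ s i = true]) (i%:~R - c)).

Definition weight (beta q c : R) (J : int -> R) (s : config) : R :=
  expR (- beta * HJ J s) * q `^ (fc c s).

(* partition function Z^J_{beta,q,c} (mu^c_J is concentrated on B) *)
Definition Zpart (beta q c : R) (J : int -> R) : \bar R :=
  \esum_(s in inB) (weight beta q c J s)%:E.

(* expectation mu^c_J(F) of a nonnegative function F *)
Definition mu (beta q c : R) (J : int -> R) (F : config -> R) : R :=
  fine (\esum_(s in inB) (weight beta q c J s * F s)%:E) / fine (Zpart beta q c J).

End Model.

Definition Nplus (s : config) : int :=
  \sum_(i \in [set i : int | i <= 0 /\ s i = true]) (1 : int).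
Definition Nminus (s : config) : int :=
  \sum_(i \in [set i : int | 1 <= i /\ s i = false]) (1 : int).
Definition Nspin (s : config) : int := Nminus s - Nplus s.

(* Translating a configuration by n sites, sigma |-> sigma(. - n), is a bijection of B
   mapping {N = 0} onto {N = n}.  It moves every domain wall by n, so H_J becomes
   H_J + H^(n)_J, and since N and f_c change by explicit amounts under a unit
   translation, f_c gains exactly -2nc + n(n+1) on {N = 0}.  Summing the weights
   over this bijection gives the identity.  The normalisation Z is the same on
   both sides. *)

From mathcomp Require Import all_boot all_order all_algebra.
From mathcomp Require Import all_classical all_reals all_analysis.
From mathcomp Require Import zify ring.
Import Order.TTheory GRing.Theory Num.Theory.
Local Open Scope classical_set_scope.
Local Open Scope ring_scope.

Set Implicit Arguments.
Unset Strict Implicit.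
Unset Printing Implicit Defensive.

Lemma int_ind_succ (P : int -> Prop) :
  P 0 -> (forall n, P n <-> P (n + 1)) -> forall n, P n.
Proof.
move=> P0 PS; elim/int_rect => [//|k|k].
  by rewrite -addn1 PoszD => /PS.
by rewrite -addn1 PoszD opprD => Pk; apply/PS; rewrite subrK.
Qed.

Lemma finite_set_int_bounded (A : set int) (lo hi : int) :
  (forall i, A i -> lo <= i <= hi) -> finite_set A.
Proof.
move=> Abnd; apply: (sub_finite_set (B := (fun k : nat => lo + k%:Z) @` `I_(absz (hi - lo)).+1)).
  by move=> i /Abnd /andP[loi ihi]; exists (absz (i - lo)); rewrite /=; lia.
exact/finite_image/finite_II.
Qed.

Lemma inB_bounds s : inB s -> exists a b : int,
  (forall i, i <= a -> s i = false) /\ (forall i, b <= i -> s i = true).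
Proof.
move=> [a [b sab]]; exists a, b; split => i hi.
  have -> : i = a - (absz (a - i))%:Z by lia.
  by case: (sab (absz (a - i))).
have -> : i = b + (absz (i - b))%:Z by lia.
by case: (sab (absz (i - b))).
Qed.

Definition minus_right (s : config) : set int := [set i | 1 <= i /\ s i = false].
Definition plus_left (s : config) : set int := [set i | i <= 0 /\ s i = true].

Lemma finite_minus_right s : inB s -> finite_set (minus_right s).
Proof.
move=> /inB_bounds [a [b [_ sb]]]; apply: (@finite_set_int_bounded _ 1 b).
move=> i [i1 si]; rewrite i1 /=; case: lerP => // /ltW /sb; by rewrite si.
Qed.

Lemma finite_plus_left s : inB s -> finite_set (plus_left s).
Proof.
move=> /inB_bounds [a [b [sa _]]]; apply: (@finite_set_int_bounded _ a 0).
move=> i [i0 si]; rewrite i0 andbT; case: lerP => // /ltW /sa; by rewrite si.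
Qed.

Lemma finite_walls s : inB s -> finite_set (walls s).
Proof.
move=> /inB_bounds [a [b [sa sb]]]; apply: (@finite_set_int_bounded _ a b).
move=> i /= /negP wi; apply/andP; split; rewrite leNgt; apply/negP => hi; apply: wi.
  by rewrite !sa //; lia.
by rewrite !sb //; lia.
Qed.

Definition translate (n : int) (s : config) : config := fun i => s (i - n).

Lemma translate0 s : translate 0 s = s.
Proof. by apply/funext => i; rewrite /translate subr0. Qed.

Lemma translateD m n s : translate (m + n) s = translate m (translate n s).
Proof. by apply/funext => i; rewrite /translate opprD addrA. Qed.

Lemma translate_inB n s : inB s -> inB (translate n s).
Proof.
move=> [a [b sab]]; exists (a + n), (b + n) => i; rewrite /translate.
by rewrite addrAC addrK (addrAC b) addrK.
Qed.

Section Imbalance.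
Variable V : zmodType.

(* N = imbalance (fun _ => 1) and f_c = 2 * imbalance (fun i => i - c). *)
Definition imbalance (F : int -> V) (s : config) : V :=
  \sum_(i \in minus_right s) F i - \sum_(i \in plus_left s) F i.

Lemma fsum_translate (P : int -> Prop) (b : bool) (F : int -> V) n s :
  \sum_(i \in [set i | P i /\ translate n s i = b]) F i =
  \sum_(j \in [set j | P (j + n) /\ s j = b]) F (j + n).
Proof.
apply: reindex_fsbig; split.
- by move=> j /= [Pj sj]; rewrite /translate addrK.
- by move=> j k _ _ /addIr.
- by move=> i /= [Pi si]; exists (i - n); rewrite ?subrK.
Qed.

(* Site 0 crosses to site 1: a +1 spin leaves plus_left, a -1 spin enters
   minus_right, and either way the imbalance gains F 1. *)
Lemma imbalance_translate1 F s : inB s ->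
  imbalance F (translate 1 s) = imbalance (fun i => F (i + 1)) s + F 1.
Proof.
move=> sB; rewrite /imbalance (fsum_translate (fun i => 1 <= i)).
rewrite (fsum_translate (fun i => i <= 0)).
case s0 : (s 0).
- have -> : [set j | 1 <= j + 1 /\ s j = false] = minus_right s.
    apply/seteqP; split => j /= [hj sj]; split => //; last by lia.
    have : j != 0 by apply/eqP => j0; move: sj; rewrite j0 s0.
    lia.
  have -> : \sum_(i \in plus_left s) F (i + 1) =
      F 1 + \sum_(j \in [set j | j + 1 <= 0 /\ s j = true]) F (j + 1).
    rewrite (fsbigD1 0) //; last exact: finite_plus_left.
    congr (_ + _); apply: eq_fsbigl; apply/seteqP; split => j /=.
      by move=> [[hj sj] /eqP j0]; split => //; lia.
    by move=> [hj sj]; split; [split => //; lia | apply/eqP; lia].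
  by rewrite opprD addrA addrAC subrK.
- have -> : [set j | j + 1 <= 0 /\ s j = true] = plus_left s.
    apply/seteqP; split => j /= [hj sj]; split => //; first by lia.
    have : j != 0 by apply/eqP => j0; move: sj; rewrite j0 s0.
    lia.
  have -> : \sum_(j \in [set j | 1 <= j + 1 /\ s j = false]) F (j + 1) =
      F 1 + \sum_(i \in minus_right s) F (i + 1).
    rewrite (fsbigD1 0) //=; last first.
      apply: (sub_finite_set (B := 0 |` minus_right s)).
        by move=> j [hj sj]; have [->|j0] := eqVneq j 0; [left | right; split => //; lia].
      by rewrite finite_setU; split => //; apply: finite_minus_right.
    congr (_ + _); apply: eq_fsbigl; apply/seteqP; split => j /=.
      by move=> [[hj sj] /eqP j0]; split => //; lia.
    by move=> [hj sj]; split; [split => //; lia | apply/eqP; lia].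
  by rewrite -addrA addrC.
Qed.

Lemma imbalanceD F G s : inB s ->
  imbalance (fun i => F i + G i) s = imbalance F s + imbalance G s.
Proof.
move=> sB; have [fm fp] := (finite_minus_right sB, finite_plus_left sB).
by rewrite /imbalance !fsbig_split // opprD addrACA.
Qed.

End Imbalance.

Lemma imbalance_morph (V W : zmodType) (f : {additive V -> W}) F s : inB s ->
  imbalance (f \o F) s = f (imbalance F s).
Proof.
move=> sB; rewrite /imbalance raddfB.
rewrite !(fsbig_finite _ _ (finite_minus_right sB)).
by rewrite !(fsbig_finite _ _ (finite_plus_left sB)) !raddf_sum.
Qed.

Lemma translateS n s : translate (n + 1) s = translate 1 (translate n s).
Proof. by rewrite addrC translateD. Qed.

Lemma Nspin_translate n s : inB s -> Nspin (translate n s) = Nspin s + n.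
Proof.
move=> sB; elim/int_ind_succ: n => [|n]; first by rewrite translate0 addr0.
rewrite translateS.
have -> : Nspin (translate 1 (translate n s)) = Nspin (translate n s) + 1.
  exact: imbalance_translate1 (translate_inB n sB).
by rewrite addrA; split => [->|/addIr].
Qed.

Section Energy.
Variable R : realType.

Lemma Nspin_intr s : inB s -> (Nspin s)%:~R = imbalance (fun _ => 1 : R) s.
Proof. by move=> sB; rewrite -(imbalance_morph intr _ sB). Qed.

Lemma fc_imbalance (c : R) s : fc c s = 2 * imbalance (fun i : int => i%:~R - c) s.
Proof. by rewrite /fc mulrBr. Qed.

Lemma fc_translate1 (c : R) s : inB s ->
  fc c (translate 1 s) = fc c s + (2 * (Nspin s)%:~R + 2 - 2 * c).
Proof.
move=> sB; rewrite !fc_imbalance imbalance_translate1 //=.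
have -> : (fun i : int => (i + 1)%:~R - c) = (fun i => (i%:~R - c) + 1 : R).
  by apply/funext => i; rewrite intrD addrAC.
by rewrite imbalanceD // -Nspin_intr //; ring.
Qed.

Lemma fc_translate (c : R) n s : inB s ->
  fc c (translate n s) =
  fc c s + (2 * n%:~R * (Nspin s)%:~R + (n * (n + 1))%:~R - 2 * n%:~R * c).
Proof.
move=> sB; elim/int_ind_succ: n => [|n]; first by rewrite translate0; ring.
rewrite translateS (fc_translate1 c (translate_inB n sB)) (Nspin_translate n sB).
have -> : fc c s + (2 * (n + 1)%:~R * (Nspin s)%:~R + ((n + 1) * (n + 1 + 1))%:~R
            - 2 * (n + 1)%:~R * c) =
          fc c s + (2 * n%:~R * (Nspin s)%:~R + (n * (n + 1))%:~R - 2 * n%:~R * c)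
          + (2 * (Nspin s + n)%:~R + 2 - 2 * c).
  by rewrite !(intrD, intrM); ring.
by split => [->|/addIr].
Qed.

Lemma HJ_translate (J : int -> R) n s : inB s ->
  HJ J (translate n s) = HJ J s + HJn n J s.
Proof.
move=> sB; rewrite /HJ /HJn (reindex_fsbig (fun i => i + n) (walls s)); last first.
  split.
  - by move=> i; rewrite /walls /translate /= addrK addrAC addrK.
  - by move=> i j _ _ /addIr.
  - move=> j; rewrite /walls /translate /= => wj; exists (j - n); rewrite ?subrK //.
    by rewrite addrAC.
rewrite -fsbig_split; last exact: finite_walls.
by apply: eq_fsbigr => i _; rewrite [RHS]addrC subrK.
Qed.

Lemma weight_translate (beta q c : R) (J : int -> R) n s :
  0 < q -> inB s -> Nspin s = 0 ->
  weight beta q c J (translate n s) =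
  q `^ (- 2 * n%:~R * c + (n * (n + 1))%:~R) *
    (weight beta q c J s * expR (- beta * HJn n J s)).
Proof.
move=> q0 sB N0; rewrite /weight HJ_translate // fc_translate // N0 mulr0z mulr0 add0r.
have -> : (n * (n + 1))%:~R - 2 * n%:~R * c = - 2 * n%:~R * c + (n * (n + 1))%:~R :> R.
  by ring.
by rewrite mulrDr expRD powRD ?(gt_eqF q0) ?implybT //; ring.
Qed.

End Energy.

Lemma translate_bij n :
  set_bij (inB `&` [set s | Nspin s == 0]) (inB `&` [set s | Nspin s == n]) (translate n).
Proof.
split.
- move=> s [sB /eqP N0]; split; first exact: translate_inB.
  by rewrite /= Nspin_translate // N0 add0r.
- move=> s t _ _ st; apply/funext => i.
  by have := congr1 (fun u => u (i + n)) st; rewrite /translate /= addrK.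
- move=> t [tB /eqP Nt]; exists (translate (- n) t).
    split; first exact: translate_inB.
    by rewrite /= Nspin_translate // Nt subrr.
  by rewrite -translateD subrr translate0.
Qed.

Section ExtendedSums.
Variables (R : realType) (T : choiceType).

Lemma esum_indicator (A : set T) (P : pred T) (f : T -> R) :
  \esum_(x in A) ((P x)%:R * f x)%:E = \esum_(x in A `&` [set x | P x]) (f x)%:E.
Proof.
rewrite esum_mkcondr; apply: eq_esum => x _.
have [Px|/negP Px] := boolP (P x).
  by rewrite mem_set // mul1r.
by rewrite memNset // mul0r.
Qed.

Lemma esumZl (A : set T) (f : T -> R) (r : R) : 0 < r ->
  \esum_(x in A) (r * f x)%:E = (r%:E * \esum_(x in A) (f x)%:E)%E.
Proof.
move=> r0; rewrite /esum -ereal_sup_pZl //; congr ereal_sup.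
apply/seteqP; split => y /=.
  move=> [X [Xf XA] <-]; exists (\sum_(x \in X) (f x)%:E)%E; first by exists X.
  by rewrite !fsumEFin // -EFinM mulr_fsumr.
move=> [z [X [Xf XA] <-] <-]; exists X => //.
by rewrite !fsumEFin // -EFinM mulr_fsumr.
Qed.

End ExtendedSums.

Lemma fine_mulEFin (R : realType) (r : R) (x : \bar R) : 0 < r ->
  fine (r%:E * x)%E = r * fine x.
Proof.
move=> r0; case: x => [y| |] //=.
- by rewrite mulry gtr0_sg // mul1e mulr0.
- by rewrite mulrNy gtr0_sg // mul1e mulr0.
Qed.

Theorem lemma2p6 (R : realType) (c beta q : R) (J : int -> R)
  (hbeta : 0 <= beta) (hq0 : 0 < q) (hq1 : q < 1)
  (hsum : (\esum_(i in [set i : int | (i <= 0)%R])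
             EFin ((1 + q `^ (2 * (i%:~R - c)) *
                 (expR (beta * J (i - 1)) /
                  (expR (beta * `|J i|) + q ^+ 2 * expR (beta * `|J (i - 2)|))))^-1)%R
           + \esum_(i in [set i : int | (0 < i)%R])
             EFin ((1 + q `^ (- 2 * (i%:~R - c)) *
                 (expR (beta * J (i - 1)) /
                  (expR (beta * `|J i|) + q ^- 2 * expR (beta * `|J (i - 2)|))))^-1)%R
           < +oo)%E)
  (n : int) :
  mu beta q c J (fun s => (Nspin s == n)%:R)
  = q `^ (- 2 * n%:~R * c + (n * (n + 1))%:~R)
    * mu beta q c J (fun s => (Nspin s == 0)%:R * expR (- beta * HJn n J s)).
Proof.
have D0 : 0 < q `^ (- 2 * n%:~R * c + (n * (n + 1))%:~R) by apply: powR_gt0.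
rewrite /mu.
have -> : \esum_(s in inB) (weight beta q c J s * (Nspin s == n)%:R)%:E =
    \esum_(s in inB `&` [set s | Nspin s == n]) (weight beta q c J s)%:E.
  by rewrite -esum_indicator; apply: eq_esum => s _; rewrite mulrC.
have -> : \esum_(s in inB)
      (weight beta q c J s * ((Nspin s == 0)%:R * expR (- beta * HJn n J s)))%:E =
    \esum_(s in inB `&` [set s | Nspin s == 0])
      (weight beta q c J s * expR (- beta * HJn n J s))%:E.
  by rewrite -esum_indicator; apply: eq_esum => s _; rewrite mulrCA.
rewrite mulrA -fine_mulEFin // -esumZl // (reindex_esum _ _ _ _ (translate_bij n)).
by congr (fine _ / _); apply: eq_esum => s [sB /eqP N0]; rewrite weight_translate.
Qed.
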